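(* Let $\Sigma=(V,E,c)$ be an undirected network with exactly three boundary vertices $A_1,A_2,A_3$. Then $\Sigma$ decomposes into three subnetworks $\Sigma_{ij}=(V,E,c_{ij})$, $1\le i<j\le 3$ (i.e. $\sum_{i<j}c_{ij}^e=c^e$ for all $e\in E$ with each $c_{ij}\ge 0$), such that for each $i<j$ $$S_{\Sigma_{ij}}(A_i)=S_{\Sigma_{ij}}(A_j)=\tfrac12 I(A_i:A_j),\qquad S_{\Sigma_{ij}}(A_k)=0\ \ (k\neq i,j),$$ where $I(A_i:A_j)=S_\Sigma(A_i)+S_\Sigma(A_j)-S_\Sigma(A_iA_j)$. In particular, $\Sigma_{ij}$ connects only $A_i$ and $A_j$ (no other pair of distinct boundary vertices is joined by a path of positive-capacity edges in $\Sigma_{ij}$), $\sum_{i<j}S_{\Sigma_{ij}}(A_k)=S_\Sigma(A_k)$ for every $k$, and the $A_i:A_j$ mutual information computed on $\Sigma_{ij}$ equals that computed on $\Sigma$.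
   Context: An undirected network $\Sigma=(V,E,c)$ is a finite graph with capacity function $c:E\to\mathbb R_{\ge0}$ and a designated set $\partial\Sigma\subset V$ of boundary vertices. Fix an arbitrary orientation of each edge; a flow is a function $v:E\to\mathbb R$ with $|v^e|\le c^e$ for all $e$ and with conservation at every non-boundary vertex (net flow into the vertex equals net flow out, negative values meaning flow against the chosen orientation). Extending $v$ to reversed edges by $v^{\tilde e}=-v^e$, the flux of $v$ out of $A\subset\partial\Sigma$ is $S_\Sigma(A;v)=\sum_{e\in E\sqcup\tilde E:\,s(e)\in A}v^e$, and $S_\Sigma(A)$ is the maximum of $S_\Sigma(A;v)$ over all flows. A subnetwork of $\Sigma$ is a network $(V,E,c_1)$ with $0\le c_1\le c$ edgewise and the same boundary; $\Sigma$ decomposes into subnetworks $(V,E,c_i)$ if their capacities sum to $c$ on every edge. Here $A_iA_j$ denotes the boundary set $\{A_i,A_j\}$. *)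

From HB Require Import structures.
From mathcomp Require Import all_boot all_order all_algebra.
From mathcomp Require Import boolp classical_sets reals.
Set Implicit Arguments. Unset Strict Implicit. Unset Printing Implicit Defensive.
Import Order.TTheory GRing.Theory Num.Theory.
Local Open Scope ring_scope.
Local Open Scope classical_set_scope.

(* An undirected network: vertices V, edges E (each with an arbitrary fixed
   orientation src e -> tgt e), capacity c, boundary set bd. *)
Section Network.
Variables (R : realType) (V E : finType) (src tgt : E -> V).

Definition is_flow (bd : {set V}) (c : E -> R) (v : E -> R) : Prop :=
  (forall e, `|v e| <= c e) /\
  (forall x, x \notin bd ->
     \sum_(e | tgt e == x) v e = \sum_(e | src e == x) v e).

(* S(A; v): sum over oriented and reversed edges starting in A,
   with v^{reversed e} = - v^e *)
Definition flux (A : {set V}) (v : E -> R) : R :=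
  \sum_(e | src e \in A) v e + \sum_(e | tgt e \in A) - v e.

Definition maxflux (bd : {set V}) (c : E -> R) (A : {set V}) : R :=
  sup [set flux A v | v in is_flow bd c].

Definition mutinf (bd : {set V}) (c : E -> R) (x y : V) : R :=
  maxflux bd c [set x] + maxflux bd c [set y] - maxflux bd c [set x; y].

Definition padj (c : E -> R) : rel V :=
  fun x y => [exists e, (0 < c e) &&
    (((src e == x) && (tgt e == y)) || ((src e == y) && (tgt e == x)))].

End Network.

(* The three subnetworks come from a three-commodity flow.  Let m_k be the
   capacity of a minimal cut separating A_k from the other two terminals.  The
   m_k satisfy the triangle inequality, and Gale's feasibility theorem routes
   every terminal demand d with sum 0 and |d_k| <= m_k.  Averaging two such
   flows (Hu's trick), and then averaging once more, yields for each pair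
   {i, j} with third terminal k a flow f_k from A_i to A_j of value
   a_k = (m_i + m_j - m_k) / 2, with sum_k |f_k| <= c.  Give Sigma_ij the
   capacity |f_k| plus a third of the unused capacity.  A minimal cut around
   A_t has capacity m_t = sum_k |flux of f_k at A_t|, while the share of each
   subnetwork in that cut is at least the flux of its own flow; hence every
   share is equal to that flux, i.e. each f_k saturates the cuts of its
   subnetwork.  By max-flow/min-cut, S_{Sigma_ij}(A_i) = S_{Sigma_ij}(A_j) = a_k,
   S_{Sigma_ij}(A_k) = 0 and S_Sigma(A_t) = m_t, so that
   I(A_i:A_j) = m_i + m_j - m_k = 2 a_k. *)

From HB Require Import structures.
From mathcomp Require Import all_boot all_order all_algebra.
From mathcomp Require Import boolp classical_sets reals.
From mathcomp Require Import lra.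
Set Implicit Arguments. Unset Strict Implicit. Unset Printing Implicit Defensive.
Import Order.TTheory GRing.Theory Num.Theory.
Local Open Scope ring_scope.

Lemma exists_between (R : realDomainType) (T : finType) (P Q : pred T)
    (lo hi : T -> R) (a b : R) :
  a <= b -> (forall X, P X -> lo X <= b) -> (forall Y, Q Y -> a <= hi Y) ->
  (forall X Y, P X -> Q Y -> lo X <= hi Y) ->
  exists2 L, a <= L <= b &
    (forall X, P X -> lo X <= L) /\ (forall Y, Q Y -> L <= hi Y).
Proof.
move=> le_ab lo_b a_hi lo_hi.
exists (\big[Num.max/a]_(X | P X) lo X); last split.
- by rewrite bigmax_ge_id; apply: bigmax_le.
- by move=> X PX; apply: le_bigmax_cond.
- by move=> Y QY; apply: bigmax_le => [|X PX]; [apply: a_hi | apply: lo_hi].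
Qed.

Lemma sum_setI_setU (R : nmodType) (T : finType) (F : T -> R) (X Y : {set T}) :
  \sum_(x in X) F x + \sum_(x in Y) F x =
  \sum_(x in X :&: Y) F x + \sum_(x in X :|: Y) F x.
Proof.
rewrite [\sum_(x in Y) _](big_setID X) [\sum_(x in X :|: Y) _](big_setID X).
by rewrite finset.setUK finset.setDUl finset.setDv finset.set0U finset.setIC addrCA.
Qed.

Lemma sum_eq_indicator (R : pzSemiRingType) (T : finType) (P : pred T) y :
  \sum_(x | P x) (x == y)%:R = (P y)%:R :> R.
Proof.
have [Py | PNy] := boolP (P y); last first.
  by rewrite big1 // => x Px; case: eqP PNy => // <-; rewrite Px.
by rewrite (bigD1 y) //= eqxx big1 ?addr0 // => x /andP[_ /negbTE->].
Qed.

Lemma normr_pm (R : numDomainType) (x y : R) : 0 <= y -> x = y \/ x = - y -> `|x| = y.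
Proof. by move=> y0 [->|->]; rewrite ?normrN ger0_norm. Qed.

Lemma mem_ord3 (i j k t : 'I_3) : uniq [:: i; j; k] -> t \in [:: i; j; k].
Proof.
move=> u; have sub : {subset [:: i; j; k] <= enum 'I_3} by move=> x; rewrite mem_enum.
by rewrite (uniq_min_size u sub _).2 ?mem_enum // size_enum_ord.
Qed.

Lemma eq_ord3 (i j k t : 'I_3) : uniq [:: i; j; k] -> (t == k) = (t != i) && (t != j).
Proof.
move=> u; have := mem_ord3 t u; move: u; rewrite /= !inE !negb_or.
case/and3P=> /andP[ij ik] jk _ /or3P[] /eqP->; rewrite !eqxx //=.
- by rewrite (negbTE ik).
- by rewrite (negbTE jk) eq_sym ij.
- by rewrite eq_sym ik eq_sym jk.
Qed.

Lemma sum_ord3 (R : nmodType) (F : 'I_3 -> R) i j k :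
  uniq [:: i; j; k] -> \sum_t F t = F i + F j + F k.
Proof.
move=> u; rewrite -big_enum (perm_big [:: i; j; k]).
  by rewrite !big_cons big_nil /= addr0 addrA.
by apply: uniq_perm; rewrite ?enum_uniq // => t; rewrite mem_enum mem_ord3.
Qed.

Definition third (i j : 'I_3) : 'I_3 := odflt i [pick k | k \notin [:: i; j]].

Lemma third_uniq i j : i != j -> uniq [:: i; j; third i j].
Proof.
move=> ij; rewrite /third; case: pickP => [k | none] /=.
  by rewrite !inE !negb_or => /andP[ki kj]; rewrite ij eq_sym ki eq_sym kj.
have : (size (enum 'I_3) <= size [:: i; j])%N.
  by apply: uniq_leq_size (enum_uniq _) _ => k _; apply/negPn; rewrite none.
by rewrite size_enum_ord.
Qed.

Lemma third_eq i j k : uniq [:: i; j; k] -> third i j = k.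
Proof.
move=> u; move: (u); rewrite /= !inE !negb_or => /and3P[/andP[ij ik] jk _].
have := mem_ord3 k (third_uniq ij); rewrite !inE.
by rewrite eq_sym (negbTE ik) eq_sym (negbTE jk) => /eqP.
Qed.

Lemma sum_pairs_third (R : nmodType) (F : 'I_3 -> R) :
  \sum_(i < 3) \sum_(j < 3 | (i < j)%N) F (third i j) = \sum_k F k.
Proof.
have u : uniq [:: ord0; lift ord0 ord0; ord_max : 'I_3] by [].
under eq_bigr do rewrite big_mkcond (sum_ord3 _ u).
rewrite !(sum_ord3 _ u) /= !add0r !addr0 (third_eq u).
rewrite (third_eq (k := lift ord0 ord0)) // (third_eq (k := ord0)) //.
by rewrite addrC [F ord_max + _]addrC addrA.
Qed.

Section Flows.
Variables (R : realType) (V E : finType) (src tgt : E -> V).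
Implicit Types (c v w : E -> R) (X Y : {set V}) (e : E) (bd : {set V}).

Local Notation flux := (flux src tgt).

Definition crosses X e : bool := (src e \in X) != (tgt e \in X).

Definition cut c X : R := \sum_(e | crosses X e) c e.

Definition orient X e : R := (src e \in X)%:R - (tgt e \in X)%:R.

Definition conserving bd v := forall x, x \notin bd -> flux [set x] v = 0.

Lemma fluxE X v : flux X v = \sum_e orient X e * v e.
Proof.
rewrite /flux big_mkcond [X in _ + X]big_mkcond -big_split /=.
apply: eq_bigr => e _; rewrite /orient.
by case: (src e \in X); case: (tgt e \in X); rewrite /=; lra.
Qed.

Lemma fluxD X v w : flux X (fun e => v e + w e) = flux X v + flux X w.
Proof. by rewrite !fluxE -big_split; apply: eq_bigr => e _; rewrite mulrDr. Qed.

Lemma fluxZ X a v : flux X (fun e => a * v e) = a * flux X v.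
Proof. by rewrite !fluxE mulr_sumr; apply: eq_bigr => e _; rewrite mulrCA. Qed.

Lemma fluxN X v : flux X (fun e => - v e) = - flux X v.
Proof. by rewrite !fluxE -sumrN; apply: eq_bigr => e _; rewrite mulrN. Qed.

Lemma flux_sum (I : finType) X (w : I -> E -> R) :
  flux X (fun e => \sum_i w i e) = \sum_i flux X (w i).
Proof.
rewrite fluxE; under eq_bigr do rewrite mulr_sumr.
by rewrite exchange_big; apply: eq_bigr => i _; rewrite fluxE.
Qed.

Lemma flux_unit X e a : flux X (fun e' => (e' == e)%:R * a) = orient X e * a.
Proof.
rewrite fluxE (bigD1 e) //= eqxx mul1r big1 ?addr0 // => e' /negbTE ->.
by rewrite mul0r mulr0.
Qed.

Lemma flux_points X v : flux X v = \sum_(x in X) flux [set x] v.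
Proof.
have indicator y : \sum_(x in X) (y \in [set x])%:R = (y \in X)%:R :> R.
  by under eq_bigr do rewrite inE eq_sym; apply: sum_eq_indicator.
under [RHS]eq_bigr do rewrite fluxE.
rewrite fluxE exchange_big /=; apply: eq_bigr => e _.
by rewrite -mulr_suml /orient sumrB !indicator.
Qed.

Lemma flux_setT v : flux [set: V] v = 0.
Proof. by rewrite fluxE big1 // => e _; rewrite /orient !inE subrr mul0r. Qed.

Lemma flux_le_cut c v X : (forall e, `|v e| <= c e) -> flux X v <= cut c X.
Proof.
move=> le_vc; rewrite fluxE /cut [X in _ <= X]big_mkcond /=; apply: ler_sum => e _.
have := le_vc e; rewrite /crosses /orient ler_norml => /andP[].
by case: (src e \in X); case: (tgt e \in X); rewrite /=; lra.
Qed.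

Lemma normr_flux_le_cut c v X : (forall e, `|v e| <= c e) -> `|flux X v| <= cut c X.
Proof.
move=> le_vc; rewrite ler_norml flux_le_cut // andbT lerNl -fluxN.
by apply: flux_le_cut => e; rewrite normrN.
Qed.

Lemma cutE c X : cut c X = \sum_e (crosses X e)%:R * c e.
Proof.
by rewrite /cut big_mkcond; apply: eq_bigr => e _; case: crosses; rewrite ?mul1r ?mul0r.
Qed.

Lemma cut_ge0 c X : (forall e, 0 <= c e) -> 0 <= cut c X.
Proof. by move=> c0; apply: sumr_ge0. Qed.

Lemma cutC c X : cut c (~: X) = cut c X.
Proof.
by apply: eq_bigl => e; rewrite /crosses !inE; case: (src e \in X); case: (tgt e \in X).
Qed.

Lemma cut_sum (I : finType) (cs : I -> E -> R) X :
  cut (fun e => \sum_i cs i e) X = \sum_i cut (cs i) X.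
Proof. by rewrite /cut exchange_big. Qed.

Lemma cut_setU c X Y : (forall e, 0 <= c e) -> cut c (X :|: Y) <= cut c X + cut c Y.
Proof.
move=> c0; rewrite !cutE -big_split; apply: ler_sum => e _; have := c0 e.
rewrite /crosses !inE.
by case: (src e \in X); case: (tgt e \in X); case: (src e \in Y); case: (tgt e \in Y);
  rewrite /=; lra.
Qed.

(* Submodularity of [cut]: the edge [e] crosses [X] and [Y], but neither
   [X :&: Y] nor [X :|: Y]. *)
Lemma cut_submod_edge c X Y e : (forall e, 0 <= c e) ->
  src e \in X :\: Y -> tgt e \in Y :\: X ->
  cut c (X :&: Y) + cut c (X :|: Y) + 2 * c e <= cut c X + cut c Y.
Proof.
move=> c0; rewrite !inE => /andP[sNY sX] /andP[tNX tY].
have -> : 2 * c e = \sum_e' (e' == e)%:R * (2 * c e').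
  by rewrite (bigD1 e) //= eqxx mul1r big1 ?addr0 // => e' /negbTE ->; rewrite mul0r.
rewrite !cutE -!big_split; apply: ler_sum => e' _ /=; have := c0 e'.
rewrite /crosses !inE; case: (eqVneq e' e) => [->|_].
  by rewrite sX tY (negbTE sNY) (negbTE tNX) /=; lra.
by case: (src e' \in X); case: (tgt e' \in X); case: (src e' \in Y); case: (tgt e' \in Y);
  rewrite /=; lra.
Qed.

Lemma cut_eq0 c X e : (forall e, 0 <= c e) -> cut c X = 0 -> crosses X e -> c e = 0.
Proof. by move=> c0 /psumr_eq0P; apply=> e' _; apply: c0. Qed.

(* The admissible values of [L] form an interval, which is nonempty by
   [cut_submod_edge]. *)
Lemma edge_flow_value c (d : V -> R) e : (forall e, 0 <= c e) ->
  (forall X, \sum_(x in X) d x <= cut c X) ->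
  exists2 L, `|L| <= c e & forall X,
    \sum_(x in X) d x - orient X e * L <= cut (fun e' => if e' == e then 0 else c e') X.
Proof.
move=> c0 le_d_cut; set c' := fun e' => _.
have cut_c' X : cut c X = cut c' X + (crosses X e)%:R * c e.
  rewrite !cutE (bigD1 e) //= [in RHS](bigD1 e) //= /c' eqxx mulr0 add0r addrC.
  by congr (_ + _); apply: eq_bigr => e' /negbTE ->.
case: (exists_between
  (P := fun X => (src e \in X) && (tgt e \notin X))
  (Q := fun Y => (tgt e \in Y) && (src e \notin Y))
  (lo := fun X => \sum_(x in X) d x + c e - cut c X)
  (hi := fun Y => cut c Y - c e - \sum_(x in Y) d x)
  (a := - c e) (b := c e)) => [||||L /andP[leL Lle] [loL Lhi]].
- by have := c0 e; lra.
- by move=> X _; have := le_d_cut X; lra.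
- by move=> Y _; have := le_d_cut Y; lra.
- move=> X Y /andP[sX tNX] /andP[tY sNY].
  have := cut_submod_edge (X := X) (Y := Y) (e := e) c0.
  rewrite !inE sX tNX tY sNY => /(_ isT isT).
  have := le_d_cut (X :&: Y); have := le_d_cut (X :|: Y).
  have := sum_setI_setU d X Y; lra.
exists L; first by rewrite ler_norml leL Lle.
move=> X; have := le_d_cut X; have := loL X; have := Lhi X.
rewrite cut_c' /orient /crosses.
by case: (src e \in X); case: (tgt e \in X) => /= hiX loX le_dX;
  [| have := loX isT | have := hiX isT |]; lra.
Qed.

Theorem feasible_flow c (d : V -> R) : (forall e, 0 <= c e) -> \sum_x d x = 0 ->
  (forall X, \sum_(x in X) d x <= cut c X) ->
  exists2 v, (forall e, `|v e| <= c e) & forall x, flux [set x] v = d x.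
Proof.
have [n] := ubnP #|[set e | 0 < c e]|; elim: n c d => // n IH c d supp_c c0 d0 le_d_cut.
have [e ce_gt0 | c_le0] := pickP (fun e => 0 < c e); last first.
  have c_eq0 e : c e = 0 by apply/le_anti; rewrite c0 leNgt c_le0.
  exists (fun=> 0) => [e | x]; first by rewrite normr0 c_eq0.
  have cut0 X : cut c X = 0 by apply: big1 => e _.
  rewrite fluxE big1 => [|e _]; last by rewrite mulr0.
  have := le_d_cut [set x]; have := le_d_cut (~: [set x]); rewrite !cut0 big_set1.
  rewrite (bigD1 x) //= in d0.
  rewrite (eq_bigl (fun y => y != x)) => [|y]; last by rewrite !inE.
  lra.
set c' := fun e' => if e' == e then 0 else c e'.
have c'0 e' : 0 <= c' e' by rewrite /c'; case: eqP.
have supp_c' : (#|[set e' | (0 < c' e')%R]| < n)%N.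
  rewrite -ltnS (leq_trans _ supp_c) // ltnS proper_card //; apply/properP; split.
    by apply/fintype.subsetP => e'; rewrite !inE /c'; case: eqP => //; rewrite ltxx.
  by exists e; rewrite !inE /c' ?eqxx ?ltxx.
have [L le_L_ce le_d'_cut] := edge_flow_value e c0 le_d_cut.
pose w e' := (e' == e)%:R * L.
case: (IH c' (fun x => d x - flux [set x] w) supp_c' c'0) => [||v' le_v'_c' flux_v'].
- rewrite sumrB d0; have := flux_points [set: V] w.
  by rewrite flux_setT (eq_bigl xpredT) => [<-|x]; rewrite ?subr0 ?inE.
- by move=> X; rewrite sumrB -flux_points flux_unit.
exists (fun e' => v' e' + w e') => [e' | x]; last by rewrite fluxD flux_v' subrK.
have := le_v'_c' e'; rewrite /c' /w; case: eqP => [-> | _].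
  by rewrite normr_le0 => /eqP ->; rewrite mul1r add0r.
by rewrite mul0r addr0.
Qed.

Lemma flux1 x v :
  flux [set x] v = \sum_(e | src e == x) v e - \sum_(e | tgt e == x) v e.
Proof. by rewrite /flux sumrN; congr (_ - _); apply: eq_bigl => e; rewrite inE. Qed.

Lemma is_flowP bd c v :
  is_flow src tgt bd c v <-> (forall e, `|v e| <= c e) /\ conserving bd v.
Proof.
split=> -[le_vc cons_v]; split=> // x xNbd; have := cons_v x xNbd.
  by rewrite flux1 => ->; rewrite subrr.
by rewrite flux1 => /eqP; rewrite subr_eq0 => /eqP.
Qed.

Lemma is_flow0 bd c : (forall e, 0 <= c e) -> is_flow src tgt bd c (fun=> 0).
Proof.
move=> c0; apply/is_flowP; split=> [e | x _]; first by rewrite normr0.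
by rewrite fluxE big1 // => e _; rewrite mulr0.
Qed.

Lemma is_flowN bd c v : is_flow src tgt bd c v -> is_flow src tgt bd c (fun e => - v e).
Proof.
move=> /is_flowP[le_vc cons_v]; apply/is_flowP; split=> [e | x xNbd].
  by rewrite normrN.
by rewrite fluxN cons_v ?oppr0.
Qed.

Lemma maxflux_ge_norm bd c v X :
  is_flow src tgt bd c v -> `|flux X v| <= maxflux src tgt bd c X.
Proof.
have ub : has_ubound [set flux X w | w in is_flow src tgt bd c].
  by exists (cut c X) => _ [w /is_flowP[le_wc _] <-]; apply: flux_le_cut.
move=> fv; rewrite ler_norml; apply/andP; split.
  rewrite lerNl -fluxN; apply: ub_le_sup => //.
  by exists (fun e => - v e); first exact: is_flowN.
by apply: ub_le_sup => //; exists v.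
Qed.

Lemma maxflux_le bd c X b : (forall e, 0 <= c e) ->
  (forall v, is_flow src tgt bd c v -> flux X v <= b) -> maxflux src tgt bd c X <= b.
Proof.
move=> c0 le_b; apply: ge_sup.
  by exists (flux X (fun=> 0)), (fun=> 0); first exact: is_flow0.
by move=> _ [v fv <-]; apply: le_b.
Qed.

Lemma maxflux_superadditive (I : finType) bd c (f : I -> E -> R) X :
  (forall i, conserving bd (f i)) -> (forall e, \sum_i `|f i e| <= c e) ->
  \sum_i `|flux X (f i)| <= maxflux src tgt bd c X.
Proof.
move=> cons_f le_fc; pose v e := \sum_i Num.sg (flux X (f i)) * f i e.
have flux_v Y : flux Y v = \sum_i Num.sg (flux X (f i)) * flux Y (f i).
  by rewrite flux_sum; apply: eq_bigr => i _; rewrite fluxZ.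
have fv : is_flow src tgt bd c v.
  apply/is_flowP; split=> [e | x xNbd]; last first.
    by rewrite flux_v big1 // => i _; rewrite cons_f ?mulr0.
  apply: le_trans (le_fc e); apply: le_trans (ler_norm_sum _ _ _) _.
  apply: ler_sum => i _; rewrite normrM normr_sg.
  by case: (_ != 0); rewrite ?mul1r ?mul0r.
have := maxflux_ge_norm X fv; rewrite flux_v; apply: le_trans.
by under eq_bigr do rewrite normrEsg; apply: ler_norm.
Qed.

Lemma cut_saturated (I : finType) c (cs f : I -> E -> R) X :
  (forall e, \sum_i cs i e = c e) -> (forall i e, `|f i e| <= cs i e) ->
  cut c X <= \sum_i `|flux X (f i)| -> forall i, cut (cs i) X = `|flux X (f i)|.
Proof.
move=> csE le_f_cs le_cut.
have le_flux_cut j : `|flux X (f j)| <= cut (cs j) X by apply: normr_flux_le_cut.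
have slack0 : \sum_j (cut (cs j) X - `|flux X (f j)|) = 0.
  apply/le_anti; rewrite sumr_ge0 ?andbT => [|j _]; last by rewrite subr_ge0.
  rewrite sumrB subr_le0 -cut_sum; apply: le_trans le_cut.
  by rewrite le_eqVlt; apply/orP; left; apply/eqP; apply: eq_bigr => e _.
move=> i; apply/eqP; rewrite -subr_eq0; apply/eqP.
by apply: (psumr_eq0P _ slack0) => // j _; rewrite subr_ge0.
Qed.

(* Hu's averaging: [(g + h) / 2] and [(g - h) / 2] fit together in the
   capacity of [g] and [h], because [|x + y| + |x - y| = 2 max(|x|, |y|)]. *)
Lemma split_flow bd c g h :
  is_flow src tgt bd c g -> is_flow src tgt bd c h ->
  exists p q, [/\ conserving bd p, conserving bd q,
    forall e, `|p e| + `|q e| <= c e,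
    forall X, flux X p = 2^-1 * (flux X g + flux X h) &
    forall X, flux X q = 2^-1 * (flux X g - flux X h)].
Proof.
move=> /is_flowP[le_gc cons_g] /is_flowP[le_hc cons_h].
have flux_p X : flux X (fun e => 2^-1 * (g e + h e)) = 2^-1 * (flux X g + flux X h).
  by rewrite fluxZ fluxD.
have flux_q X : flux X (fun e => 2^-1 * (g e - h e)) = 2^-1 * (flux X g - flux X h).
  by rewrite fluxZ fluxD fluxN.
exists (fun e => 2^-1 * (g e + h e)), (fun e => 2^-1 * (g e - h e)); split=> //.
- by move=> x xNbd; rewrite flux_p cons_g ?cons_h // addr0 mulr0.
- by move=> x xNbd; rewrite flux_q cons_g ?cons_h // subr0 mulr0.
move=> e; have := le_gc e; have := le_hc e; rewrite !ler_norml => /andP[? ?] /andP[? ?].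
case: (lerP 0 (2^-1 * (g e + h e))) => hp; case: (lerP 0 (2^-1 * (g e - h e))) => hq;
  by rewrite ?(ger0_norm hp) ?(ltr0_norm hp) ?(ger0_norm hq) ?(ltr0_norm hq); lra.
Qed.

Lemma connect_cut0 c X x y : (forall e, 0 <= c e) -> cut c X = 0 ->
  connect (padj src tgt c) x y -> (x \in X) = (y \in X).
Proof.
move=> c0 cut0; apply: closed_connect => u w /existsP[e /andP[ce_gt0 ends_e]].
have : ~~ crosses X e by apply: contraTN ce_gt0 => /(cut_eq0 c0 cut0) ->; rewrite ltxx.
by rewrite /crosses negbK; case/orP: ends_e => /andP[/eqP-> /eqP->] /eqP.
Qed.
End Flows.

Section Terminals.
Variables (R : realType) (V E : finType) (src tgt : E -> V) (A : 'I_3 -> V).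
Hypothesis A_inj : injective A.
Implicit Types (c v : E -> R) (X Y : {set V}) (i j k t : 'I_3).

Local Notation bd := [set A i | i : 'I_3].
Local Notation flux := (flux src tgt).
Local Notation cut := (cut src tgt).
Local Notation conserving := (conserving src tgt bd).
Local Notation is_flow := (is_flow src tgt bd).
Local Notation maxflux := (maxflux src tgt bd).

Definition separates k X : bool := [forall t, (A t \in X) == (t == k)].

Lemma separatesP k X : reflect (forall t, (A t \in X) = (t == k)) (separates k X).
Proof. by apply: (iffP forallP) => sepX t; [apply/eqP | rewrite sepX]. Qed.

Lemma separates1 k : separates k [set A k].
Proof. by apply/separatesP => t; rewrite inE (inj_eq A_inj). Qed.

Lemma flux_separates v k X : conserving v -> separates k X ->
  flux X v = flux [set A k] v.
Proof.
move=> cons_v /separatesP sepX; rewrite flux_points (bigD1 (A k)) /= ?sepX ?eqxx //.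
rewrite big1 ?addr0 // => x /andP[xX xk]; apply: cons_v; apply/imsetP => -[t _ xt].
by move: xX xk; rewrite xt sepX => /eqP->; rewrite eqxx.
Qed.

Lemma sum_flux_terminals v : conserving v -> \sum_t flux [set A t] v = 0.
Proof.
move=> cons_v; rewrite -[RHS](flux_setT src tgt v) flux_points (bigID (mem bd)) /=.
rewrite [X in _ = _ + X]big1 => [|x /andP[_ /cons_v] //].
rewrite addr0 (eq_bigl (mem bd)) => [|x]; last by rewrite inE.
by rewrite big_imset /= => [|x y _ _ /A_inj].
Qed.

Lemma maxflux_pair c i j k : uniq [:: i; j; k] ->
  maxflux c [set A i; A j] = maxflux c [set A k].
Proof.
move=> u; have ij : i != j by move: u; rewrite /= !inE negb_or => /andP[/andP[]].
have flux_ij v : is_flow c v -> flux [set A i; A j] v = - flux [set A k] v.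
  move=> /is_flowP[_ cons_v]; have := sum_flux_terminals cons_v.
  rewrite flux_points big_setU1 ?big_set1 ?inE ?(inj_eq A_inj) //= (sum_ord3 _ u).
  by move=> /eqP; rewrite addrC addr_eq0 => /eqP->; rewrite opprK addrC.
rewrite /maxflux; congr sup; apply/seteqP; split=> _ [v fv <-].
  by exists (fun e => - v e); [exact: is_flowN | rewrite fluxN flux_ij].
exists (fun e => - v e); first exact: is_flowN.
by rewrite flux_ij ?fluxN ?opprK //; exact: is_flowN.
Qed.

Lemma mutinf_terminals c i j k : uniq [:: i; j; k] ->
  mutinf src tgt bd c (A i) (A j) =
  maxflux c [set A i] + maxflux c [set A j] - maxflux c [set A k].
Proof. by move=> u; rewrite /mutinf (maxflux_pair _ u). Qed.

Lemma maxflux_le_cut c k X : (forall e, 0 <= c e) -> separates k X ->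
  maxflux c [set A k] <= cut c X.
Proof.
move=> c0 sepX; apply: maxflux_le => // v /is_flowP[le_vc cons_v].
by rewrite -(flux_separates cons_v sepX); apply: flux_le_cut.
Qed.

Lemma maxflux_eq_cut c v k X : (forall e, 0 <= c e) -> is_flow c v -> separates k X ->
  cut c X <= `|flux [set A k] v| -> maxflux c [set A k] = cut c X.
Proof.
move=> c0 fv sepX le_cut; apply/le_anti; rewrite maxflux_le_cut //=.
exact: le_trans le_cut (maxflux_ge_norm _ fv).
Qed.

Definition mincut c k : {set V} := [arg min_(X < [set A k] | separates k X) cut c X]%O.

Lemma mincut_separates c k : separates k (mincut c k).
Proof. by rewrite /mincut; case: arg_minP => //; exact: separates1. Qed.

Lemma mincut_min c k X : separates k X -> cut c (mincut c k) <= cut c X.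
Proof. by rewrite /mincut; case: arg_minP => [|Y _ Ymin /Ymin //]; exact: separates1. Qed.

Lemma mincut_triangle c i j k : (forall e, 0 <= c e) -> uniq [:: i; j; k] ->
  cut c (mincut c k) <= cut c (mincut c i) + cut c (mincut c j).
Proof.
move=> c0 u; apply: le_trans (cut_setU src tgt _ _ c0).
rewrite -[cut c (_ :|: _)]cutC; apply: mincut_min.
apply/separatesP => t; rewrite !inE !(separatesP _ _ (mincut_separates _ _)).
by rewrite (eq_ord3 _ u) negb_or.
Qed.

Lemma norm_terminal_demand_le_cut c (d : 'I_3 -> R) X : (forall e, 0 <= c e) ->
  (forall k, `|d k| <= cut c (mincut c k)) -> (#|[set t | A t \in X]| <= 1)%N ->
  `|\sum_(t | A t \in X) d t| <= cut c X.
Proof.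
move=> c0 le_d_cut; case: (set_0Vmem [set t | A t \in X]) => [X0 _ | [k kX] /card_le1_eqP X1].
  rewrite big_pred0 ?normr0 ?cut_ge0 // => t.
  by have := finset.in_set0 t; rewrite -X0 inE.
have sepX : separates k X.
  apply/separatesP => t; apply/idP/eqP => [AtX | ->]; last by rewrite inE in kX.
  by apply: X1 => //; rewrite inE.
rewrite (big_pred1 k) => [|t]; last by rewrite (separatesP _ _ sepX).
exact: le_trans (le_d_cut k) (mincut_min _ sepX).
Qed.

(* One of the two sides of [X] contains at most one of the three terminals. *)
Lemma terminal_demand_le_cut c (d : 'I_3 -> R) X : (forall e, 0 <= c e) ->
  \sum_t d t = 0 -> (forall k, `|d k| <= cut c (mincut c k)) ->
  \sum_(t | A t \in X) d t <= cut c X.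
Proof.
move=> c0 d0 le_d_cut; have [few | many] := leqP #|[set t | A t \in X]| 1.
  exact: le_trans (ler_norm _) (norm_terminal_demand_le_cut c0 le_d_cut few).
have few : (#|[set t | A t \in ~: X]| <= 1)%N.
  have -> : [set t | A t \in ~: X] = ~: [set t | A t \in X] by apply/setP => t; rewrite !inE.
  by rewrite -(leq_add2l #|[set t | A t \in X]|) cardsC card_ord addn1 ltnS.
have /eqP : \sum_(t | A t \in X) d t + \sum_(t | A t \in ~: X) d t = 0.
  rewrite -[RHS]d0 [RHS](bigID (fun t => A t \in X)) /=.
  by congr (_ + _); apply: eq_bigl => t; rewrite inE.
rewrite addr_eq0 => /eqP ->; rewrite -cutC.
by apply: le_trans (norm_terminal_demand_le_cut c0 le_d_cut few); rewrite -normrN ler_norm.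
Qed.

Theorem feasible_terminal_flow c (d : 'I_3 -> R) : (forall e, 0 <= c e) ->
  \sum_t d t = 0 -> (forall k, `|d k| <= cut c (mincut c k)) ->
  exists2 v, is_flow c v & forall k, flux [set A k] v = d k.
Proof.
move=> c0 d0 le_d_cut; pose D x := \sum_t (x == A t)%:R * d t.
have D_A k : D (A k) = d k.
  rewrite /D (bigD1 k) //= eqxx mul1r big1 ?addr0 // => t /negbTE tk.
  by rewrite (inj_eq A_inj) eq_sym tk mul0r.
have sum_D X : \sum_(x in X) D x = \sum_(t | A t \in X) d t.
  rewrite /D exchange_big /= [RHS]big_mkcond; apply: eq_bigr => t _.
  by rewrite -mulr_suml sum_eq_indicator; case: (A t \in X); rewrite ?mul1r ?mul0r.
case: (feasible_flow (src := src) (tgt := tgt) (d := D) c0) => [||v le_vc flux_v].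
- rewrite /D exchange_big /= -[RHS]d0; apply: eq_bigr => t _.
  by rewrite -mulr_suml sum_eq_indicator mul1r.
- by move=> X; rewrite sum_D; apply: terminal_demand_le_cut.
exists v => [|k]; last by rewrite flux_v D_A.
apply/is_flowP; split=> // x xNbd; rewrite flux_v /D big1 // => t _.
by case: eqP xNbd => [-> | _]; rewrite ?mul0r // imset_f.
Qed.

(* Shown below to be [I(A_i:A_j) / 2], where [i] and [j] are the terminals
   other than [k]. *)
Definition pair_value c k : R := (\sum_t cut c (mincut c t)) / 2 - cut c (mincut c k).

Lemma pair_valueE c i j k : uniq [:: i; j; k] ->
  pair_value c k = (cut c (mincut c i) + cut c (mincut c j) - cut c (mincut c k)) / 2.
Proof. by move=> u; rewrite /pair_value (sum_ord3 _ u); lra. Qed.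

Lemma sum_pair_values c t : \sum_k (t != k)%:R * pair_value c k = cut c (mincut c t).
Proof.
have : \sum_k pair_value c k = (\sum_k cut c (mincut c k)) / 2.
  by rewrite /pair_value sumrB sumr_const card_ord -mulr_natr; lra.
move=> sum_a; rewrite (bigD1 t) //= eqxx mul0r add0r.
rewrite (eq_bigr (pair_value c)) => [|k kt]; last by rewrite eq_sym kt mul1r.
by move: sum_a; rewrite (bigD1 t) //= {1}/pair_value; lra.
Qed.

Lemma three_commodity_flow c : (forall e, 0 <= c e) -> exists f : 'I_3 -> E -> R,
  [/\ forall k, conserving (f k), forall e, \sum_k `|f k e| <= c e &
      forall k t, `|flux [set A t] (f k)| = (t != k)%:R * pair_value c k].
Proof.
move=> c0; pose o1 : 'I_3 := lift ord0 ord0.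
have u : uniq [:: ord0; o1; ord_max] by [].
have ord3_ind (P : 'I_3 -> Prop) : P ord0 -> P o1 -> P ord_max -> forall t, P t.
  by move=> P0 P1 P2 t; have := mem_ord3 t u; rewrite !inE => /or3P[] /eqP->.
set m0 := cut c (mincut c ord0); set m1 := cut c (mincut c o1).
set m2 := cut c (mincut c ord_max).
have m0_ge0 : 0 <= m0 by apply: cut_ge0.
have m1_ge0 : 0 <= m1 by apply: cut_ge0.
have m2_ge0 : 0 <= m2 by apply: cut_ge0.
have tri2 : m2 <= m0 + m1 by apply: mincut_triangle.
have tri1 : m1 <= m0 + m2 by apply: mincut_triangle.
have tri0 : m0 <= m1 + m2 by apply: mincut_triangle.
set a0 := pair_value c ord0; set a1 := pair_value c o1; set a2 := pair_value c ord_max.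
have a0E : a0 = (m1 + m2 - m0) / 2 by apply: pair_valueE.
have a1E : a1 = (m0 + m2 - m1) / 2 by apply: pair_valueE.
have a2E : a2 = (m0 + m1 - m2) / 2 by apply: pair_valueE.
(* [g] and [h] route the demands (m0, m2 - m0, -m2) and (m0, -m1, m1 - m0).
   Their half-difference [q] is the commodity between terminals 1 and 2; their
   half-sum [p] leaves terminal 0 and is split, within the capacity [|p|], by
   averaging it with a flow [p'] of demands (a2 - a1, -a2, a1). *)
case: (feasible_terminal_flow (d := fun t => [:: m0; m2 - m0; - m2]`_t) c0)
  => [|t|g g_flow g_flux].
- by rewrite (sum_ord3 _ u) /=; lra.
- by elim/ord3_ind: t; rewrite /= -/m0 -/m1 -/m2 ler_norml; apply/andP; split; lra.
case: (feasible_terminal_flow (d := fun t => [:: m0; - m1; m1 - m0]`_t) c0)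
  => [|t|h h_flow h_flux].
- by rewrite (sum_ord3 _ u) /=; lra.
- by elim/ord3_ind: t; rewrite /= -/m0 -/m1 -/m2 ler_norml; apply/andP; split; lra.
have [p [q [p_cons q_cons pq_le p_flux q_flux]]] := split_flow g_flow h_flow.
have p_flow : is_flow (fun e => `|p e|) p by apply/is_flowP.
have p_norm t : `|flux [set A t] p| = [:: m0; a2; a1]`_t.
  elim/ord3_ind: t; rewrite p_flux g_flux h_flux /=;
  by apply: normr_pm; try lra; (left; lra) || (right; lra).
case: (feasible_terminal_flow (c := fun e => `|p e|) (d := fun t => [:: a2 - a1; - a2; a1]`_t))
  => [e|||p' p'_flow p'_flux]; first exact: normr_ge0.
- by rewrite (sum_ord3 _ u) /=; lra.
- move=> t; apply: le_trans (_ : `|flux [set A t] p| <= _); last first.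
    rewrite -(flux_separates p_cons (mincut_separates (fun e => `|p e|) t)).
    exact: normr_flux_le_cut.
  by rewrite p_norm; elim/ord3_ind: t; rewrite /= ler_norml; apply/andP; split; lra.
have [f01 [f02 [f01_cons f02_cons f_le f01_flux f02_flux]]] := split_flow p_flow p'_flow.
exists (fun k => if k == ord0 then q else if k == o1 then f02 else f01); split.
- by elim/ord3_ind.
- by move=> e; rewrite (sum_ord3 _ u) /=; have := pq_le e; have := f_le e; lra.
move=> k t; elim/ord3_ind: k; elim/ord3_ind: t;
  rewrite /= -/a0 -/a1 -/a2 ?f01_flux ?f02_flux ?q_flux ?p_flux g_flux h_flux ?p'_flux /=;
  by apply: normr_pm; try lra; (left; lra) || (right; lra).
Qed.

Lemma pairwise_decomposition c : (forall e, 0 <= c e) -> exists cs : 'I_3 -> E -> R,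
  [/\ forall k e, 0 <= cs k e, forall e, \sum_k cs k e = c e,
      forall k t, maxflux (cs k) [set A t] = (t != k)%:R * pair_value c k,
      forall k, cut (cs k) (mincut c k) = 0 &
      forall t, maxflux c [set A t] = cut c (mincut c t)].
Proof.
move=> c0; have [f [f_cons f_le f_flux]] := three_commodity_flow c0.
(* The unused capacity is shared equally; any split would do. *)
pose slack e := c e - \sum_t `|f t e|.
have slack_ge0 e : 0 <= slack e by rewrite subr_ge0.
pose cs k e := `|f k e| + slack e / 3.
have cs_ge0 k e : 0 <= cs k e by rewrite addr_ge0 ?divr_ge0.
have csE e : \sum_k cs k e = c e.
  by rewrite big_split /= sumr_const card_ord -mulr_natr /slack; lra.
have f_flow k : is_flow (cs k) (f k).
  by apply/is_flowP; split=> // e; rewrite lerDl divr_ge0.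
have cut_cs k t : cut (cs k) (mincut c t) = `|flux [set A t] (f k)|.
  have sep_t := mincut_separates c t.
  rewrite -(flux_separates (f_cons k) sep_t).
  apply: (cut_saturated csE) => [j e | ]; first by have /is_flowP[] := f_flow j.
  under eq_bigr do rewrite (flux_separates (f_cons _) sep_t) f_flux.
  by rewrite sum_pair_values.
exists cs; split=> // [k t | k | t].
- by rewrite (maxflux_eq_cut (cs_ge0 k) (f_flow k) (mincut_separates c t)) ?cut_cs ?f_flux.
- by rewrite cut_cs f_flux eqxx mul0r.
apply/le_anti; rewrite maxflux_le_cut ?mincut_separates //=.
rewrite -[X in X <= _](sum_pair_values c t); under eq_bigr do rewrite -f_flux.
exact: maxflux_superadditive.
Qed.

Lemma connect_terminals c i j k X x y : (forall e, 0 <= c e) -> uniq [:: i; j; k] ->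
  separates k X -> cut c X = 0 -> x \in bd -> y \in bd -> x != y ->
  connect (padj src tgt c) x y -> [set x; y] = [set A i; A j].
Proof.
move=> c0 u sepX cut0 /imsetP[p _ ->] /imsetP[q _ ->] xy.
move=> /(connect_cut0 c0 cut0); rewrite !(separatesP _ _ sepX).
have pq : p != q by apply: contraNneq xy => ->.
move: pq; have := mem_ord3 q u; have := mem_ord3 p u.
move: u; rewrite /= !inE !negb_or => /and3P[/andP[ij ik] jk _].
case/or3P=> /eqP->; case/or3P=> /eqP->; rewrite ?eqxx ?(negbTE ik) ?(negbTE jk) //.
by rewrite finset.setUC.
Qed.
End Terminals.

Theorem theorem4 (R : realType) (V E : finType) (src tgt : E -> V)
    (c : E -> R) (A : 'I_3 -> V) :
  (forall e, 0 <= c e) -> injective A ->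
  let bd := [set A i | i : 'I_3] in
  exists cs : 'I_3 -> 'I_3 -> E -> R,
    (* decomposition into subnetworks Sigma_ij, i < j *)
    (forall i j : 'I_3, (i < j)%N -> forall e, 0 <= cs i j e) /\
    (forall e, \sum_(i < 3) \sum_(j < 3 | (i < j)%N) cs i j e = c e) /\
    (* main property *)
    (forall i j : 'I_3, (i < j)%N ->
       maxflux src tgt bd (cs i j) [set A i] = mutinf src tgt bd c (A i) (A j) / 2 /\
       maxflux src tgt bd (cs i j) [set A j] = mutinf src tgt bd c (A i) (A j) / 2 /\
       (forall k : 'I_3, k != i -> k != j ->
          maxflux src tgt bd (cs i j) [set A k] = 0)) /\
    (* in particular: Sigma_ij connects only A_i and A_j *)
    (forall i j : 'I_3, (i < j)%N -> forall x y : V,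
       x \in bd -> y \in bd -> x != y ->
       connect (padj src tgt (cs i j)) x y -> [set x; y] = [set A i; A j]) /\
    (* in particular: sum_{i<j} S_{Sigma_ij}(A_k) = S_Sigma(A_k) *)
    (forall k : 'I_3,
       \sum_(i < 3) \sum_(j < 3 | (i < j)%N) maxflux src tgt bd (cs i j) [set A k]
       = maxflux src tgt bd c [set A k]) /\
    (* in particular: I(A_i:A_j) on Sigma_ij equals that on Sigma *)
    (forall i j : 'I_3, (i < j)%N ->
       mutinf src tgt bd (cs i j) (A i) (A j) = mutinf src tgt bd c (A i) (A j)).
Proof.
move=> c0 A_inj bd.
have [cs [cs_ge0 csE cs_maxflux cs_cut c_maxflux]] := pairwise_decomposition src tgt A_inj c0.
have u (i j : 'I_3) : (i < j)%N -> uniq [:: i; j; third i j].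
  by move=> lt_ij; apply: third_uniq; rewrite neq_ltn lt_ij.
have third_neq (i j : 'I_3) : (i < j)%N -> (i != third i j) && (j != third i j).
  by move=> /u; rewrite /= !inE !negb_or => /and3P[/andP[_ ->] -> _].
have half_mutinf (i j : 'I_3) : (i < j)%N ->
    mutinf src tgt bd c (A i) (A j) / 2 = pair_value src tgt A c (third i j).
  move=> /u uij; rewrite (mutinf_terminals _ _ A_inj _ uij) !c_maxflux.
  by rewrite (pair_valueE _ _ _ _ uij).
exists (fun i j => cs (third i j)) => /=; split; [|split; [|split; [|split; [|split]]]].
- by move=> i j _; apply: cs_ge0.
- by move=> e; rewrite (sum_pairs_third (fun k => cs k e)).
- move=> i j lt_ij; have /andP[ik jk] := third_neq i j lt_ij.
  rewrite half_mutinf // !cs_maxflux ik jk mul1r; split=> //; split=> // k k_i k_j.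
  by rewrite cs_maxflux (eq_ord3 _ (u i j lt_ij)) k_i k_j mul0r.
- move=> i j lt_ij x y; apply: (connect_terminals (cs_ge0 _) (u i j lt_ij) _ (cs_cut _)).
  exact: mincut_separates.
- move=> k; rewrite (sum_pairs_third (fun k' => maxflux src tgt bd (cs k') [set A k])).
  by under eq_bigr do rewrite cs_maxflux; rewrite sum_pair_values c_maxflux.
move=> i j lt_ij; have /andP[ik jk] := third_neq i j lt_ij.
rewrite (mutinf_terminals _ _ A_inj _ (u i j lt_ij)) !cs_maxflux ik jk eqxx mul1r mul0r.
by have := half_mutinf i j lt_ij; lra.
Qed.
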